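(* Every transformation $q\mapsto(aq+b)(cq+d)^{-1}$ induced by an invertible matrix $\begin{pmatrix}a&b\\c&d\end{pmatrix}$ with entries in the Hurwitz integers which satisfies the (BG) conditions belongs to the Hurwitz quaternionic modular group $PSL(2,\mathfrak H)$.
   Context: The Hurwitz integers are $\{a+b\mathbf i+c\mathbf j+d\mathbf k: a,b,c,d\in\mathbb Z\text{ or }a,b,c,d\in\mathbb Z+\tfrac12\}$. A quaternionic matrix $A$ satisfies the (BG) conditions if $\bar A^tKA=K$, $K=\begin{pmatrix}0&1\\1&0\end{pmatrix}$, equivalently $\Re(a\bar c)=0$, $\Re(b\bar d)=0$, $\bar bc+\bar da=1$. $PSL(2,\mathfrak H)$ is the group generated by $T(q)=q^{-1}$, the translations $q\mapsto q+\omega$ with $\omega\in\{b\mathbf i+c\mathbf j+d\mathbf k:b,c,d\in\mathbb Z\}$, and the maps $q\mapsto uqu^{-1}$ where $u$ ranges over the 24 Hurwitz units $\pm1,\pm\mathbf i,\pm\mathbf j,\pm\mathbf k,\frac12(\pm1\pm\mathbf i\pm\mathbf j\pm\mathbf k)$. *)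

From HB Require Import structures.
From mathcomp Require Import all_boot all_order all_algebra.
Set Implicit Arguments. Unset Strict Implicit. Unset Printing Implicit Defensive.
Import Order.TTheory GRing.Theory Num.Theory.
Local Open Scope ring_scope.

Section Quat.
Variable R : realFieldType.

Record quat := Quat { q0 : R; q1 : R; q2 : R; q3 : R }.

Definition qadd (x y : quat) := Quat (q0 x + q0 y) (q1 x + q1 y) (q2 x + q2 y) (q3 x + q3 y).
Definition qmul (x y : quat) :=
  Quat (q0 x * q0 y - q1 x * q1 y - q2 x * q2 y - q3 x * q3 y)
       (q0 x * q1 y + q1 x * q0 y + q2 x * q3 y - q3 x * q2 y)
       (q0 x * q2 y - q1 x * q3 y + q2 x * q0 y + q3 x * q1 y)
       (q0 x * q3 y + q1 x * q2 y - q2 x * q1 y + q3 x * q0 y).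
Definition qconj (x : quat) := Quat (q0 x) (- q1 x) (- q2 x) (- q3 x).
Definition qnorm2 (x : quat) := q0 x ^+ 2 + q1 x ^+ 2 + q2 x ^+ 2 + q3 x ^+ 2.
Definition qscale (r : R) (x : quat) := Quat (r * q0 x) (r * q1 x) (r * q2 x) (r * q3 x).
Definition qinv (x : quat) := qscale (qnorm2 x)^-1 (qconj x).
Definition qzero := Quat 0 0 0 0.
Definition qone := Quat 1 0 0 0.
Definition qRe (x : quat) := q0 x.

Definition hurwitz (x : quat) : Prop :=
  exists a b c d : int,
    (q0 x = a%:~R /\ q1 x = b%:~R /\ q2 x = c%:~R /\ q3 x = d%:~R) \/
    (q0 x = a%:~R + 2^-1 /\ q1 x = b%:~R + 2^-1 /\ q2 x = c%:~R + 2^-1 /\ q3 x = d%:~R + 2^-1).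

Definition qmx_invertible (a b c d : quat) : Prop :=
  exists a' b' c' d' : quat,
    qadd (qmul a a') (qmul b c') = qone /\ qadd (qmul a b') (qmul b d') = qzero /\
    qadd (qmul c a') (qmul d c') = qzero /\ qadd (qmul c b') (qmul d d') = qone /\
    qadd (qmul a' a) (qmul b' c) = qone /\ qadd (qmul a' b) (qmul b' d) = qzero /\
    qadd (qmul c' a) (qmul d' c) = qzero /\ qadd (qmul c' b) (qmul d' d) = qone.

Definition BG (a b c d : quat) : Prop :=
  [/\ qRe (qmul a (qconj c)) = 0, qRe (qmul b (qconj d)) = 0 &
      qadd (qmul (qconj b) c) (qmul (qconj d) a) = qone].

(* Points of H u {oo}: None is the point at infinity *)
Definition P1 := option quat.

Definition mobius (a b c d : quat) (p : P1) : P1 :=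
  match p with
  | Some q => let den := qadd (qmul c q) d in
              if qnorm2 den == 0 then None else Some (qmul (qadd (qmul a q) b) (qinv den))
  | None => if qnorm2 c == 0 then None else Some (qmul a (qinv c))
  end.

Definition Tinv (p : P1) : P1 :=
  match p with
  | Some q => if qnorm2 q == 0 then None else Some (qinv q)
  | None => Some qzero
  end.

Definition transl (w : quat) (p : P1) : P1 :=
  match p with Some q => Some (qadd q w) | None => None end.
Definition pure_int_quat (w : quat) : Prop :=
  exists b c d : int, w = Quat 0 b%:~R c%:~R d%:~R.

Definition pm1 (x : R) := x = 1 \/ x = -1.
Definition pmhalf (x : R) := x = 2^-1 \/ x = - 2^-1.
Definition hurwitz_unit (u : quat) : Prop :=
     (pm1 (q0 u) /\ q1 u = 0 /\ q2 u = 0 /\ q3 u = 0)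
  \/ (pm1 (q1 u) /\ q0 u = 0 /\ q2 u = 0 /\ q3 u = 0)
  \/ (pm1 (q2 u) /\ q0 u = 0 /\ q1 u = 0 /\ q3 u = 0)
  \/ (pm1 (q3 u) /\ q0 u = 0 /\ q1 u = 0 /\ q2 u = 0)
  \/ (pmhalf (q0 u) /\ pmhalf (q1 u) /\ pmhalf (q2 u) /\ pmhalf (q3 u)).

Definition uconj (u : quat) (p : P1) : P1 :=
  match p with Some q => Some (qmul (qmul u q) (qinv u)) | None => None end.

Definition PSL2H_generator (f : P1 -> P1) : Prop :=
  f = Tinv \/ (exists w, pure_int_quat w /\ f = transl w)
          \/ (exists u, hurwitz_unit u /\ f = uconj u).

Definition in_PSL2H (f : P1 -> P1) : Prop :=
  forall S : (P1 -> P1) -> Prop,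
    S id ->
    (forall g, PSL2H_generator g -> S g) ->
    (forall g h, S g -> S h -> S (g \o h)) ->
    (forall g h, S g -> g \o h =1 id -> h \o g =1 id -> S h) ->
    S f.

End Quat.

From mathcomp Require Import all_boot all_order all_algebra.
From mathcomp Require Import ring lra zify.
From Stdlib Require Import FunctionalExtensionality.
Set Implicit Arguments.
Unset Strict Implicit.
Unset Printing Implicit Defensive.
Import Order.TTheory GRing.Theory Num.Theory.
Local Open Scope ring_scope.

(* For an invertible (BG) matrix A the left inverse K A^* K is also a right
   inverse, which adds the condition Re(c d^bar) = 0; then c^bar d is a pure
   Hurwitz integer, i.e. lies in Zi + Zj + Zk.  Descend on |c|^2: for pure integral
   w, the map of A is the map of [[aw+b, a], [cw+d, c]] composed with T and the
   translation by -w; the new matrix again satisfies the conditions, and w can be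
   chosen with |cw+d|^2 <= 3/4 |c|^2.  When c = 0 the conditions force a = d to be
   a unit, and the map is conjugation by d followed by translation by b d^bar. *)

Lemma int_sqr_sum4_eq1 (a b c d : int) : a * a + b * b + c * c + d * d = 1 ->
     ((a = 1 \/ a = -1) /\ b = 0 /\ c = 0 /\ d = 0)
  \/ ((b = 1 \/ b = -1) /\ a = 0 /\ c = 0 /\ d = 0)
  \/ ((c = 1 \/ c = -1) /\ a = 0 /\ b = 0 /\ d = 0)
  \/ ((d = 1 \/ d = -1) /\ a = 0 /\ b = 0 /\ c = 0).
Proof.
move=> h.
have ha : a = -1 \/ a = 0 \/ a = 1 by nia.
have hb : b = -1 \/ b = 0 \/ b = 1 by nia.
have hc : c = -1 \/ c = 0 \/ c = 1 by nia.
have hd : d = -1 \/ d = 0 \/ d = 1 by nia.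
by move: h; case: ha => [|[|]] ->; case: hb => [|[|]] ->; case: hc => [|[|]] ->;
  case: hd => [|[|]] ->; lia.
Qed.

Lemma int_even_or_odd (n : int) : exists m, n = 2 * m \/ n = 2 * m + 1.
Proof.
exists (n %/ 2)%Z; have := divz_eq n 2.
have := modz_ge0 n (isT : (2 : int) != 0); have := ltz_pmod n (isT : 0 < 2 :> int).
lia.
Qed.

(* Rounding [- t / N] to the nearest integer. *)
Lemma int_near_multiple (N t : int) : 0 < N ->
  exists m, 4 * ((N * m + t) * (N * m + t)) <= N * N.
Proof.
move=> N_gt0; have e := divz_eq t N.
have r_ge0 := modz_ge0 t (lt0r_neq0 N_gt0); have r_lt := ltz_pmod t N_gt0.
move: e r_ge0 r_lt; set q := (t %/ N)%Z; set r := (t %% N)%Z => e r_ge0 r_lt.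
by have [r_small|r_big] := lerP (2 * r) N; [exists (- q) | exists (- q - 1)]; nia.
Qed.

Definition qopp {R : realFieldType} (x : quat R) :=
  Quat (- q0 x) (- q1 x) (- q2 x) (- q3 x).
Definition qdot {R : realFieldType} (x y : quat R) :=
  q0 x * q0 y + q1 x * q1 y + q2 x * q2 y + q3 x * q3 y.

Ltac quat_expand := repeat match goal with x : quat _ |- _ => destruct x end;
  rewrite /qopp /qmul /qadd /qconj /qscale /qinv /qnorm2 /qone /qzero /qRe /qdot /=.
Ltac int_casts := rewrite /= ?(rmorphD, rmorphM, rmorphN, rmorphB, rmorph1, rmorph0) /=.

Section QuaternionAlgebra.
Context {R : realFieldType}.
Local Notation Q := (quat R).

Lemma qmulA (x y z : Q) : qmul x (qmul y z) = qmul (qmul x y) z.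
Proof. by quat_expand; f_equal; ring. Qed.
Lemma qmulDl (x y z : Q) : qmul (qadd x y) z = qadd (qmul x z) (qmul y z).
Proof. by quat_expand; f_equal; ring. Qed.
Lemma qaddC (x y : Q) : qadd x y = qadd y x.
Proof. by quat_expand; f_equal; ring. Qed.
Lemma qmulq1 (x : Q) : qmul x (qone R) = x.
Proof. by quat_expand; f_equal; ring. Qed.
Lemma qmul1q (x : Q) : qmul (qone R) x = x.
Proof. by quat_expand; f_equal; ring. Qed.
Lemma qmulq0 (x : Q) : qmul x (qzero R) = qzero R.
Proof. by quat_expand; f_equal; ring. Qed.
Lemma qmul0q (x : Q) : qmul (qzero R) x = qzero R.
Proof. by quat_expand; f_equal; ring. Qed.
Lemma qadd0q (x : Q) : qadd (qzero R) x = x.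
Proof. by quat_expand; f_equal; ring. Qed.
Lemma qaddq0 (x : Q) : qadd x (qzero R) = x.
Proof. by quat_expand; f_equal; ring. Qed.
Lemma qscale1 (x : Q) : qscale 1 x = x.
Proof. by quat_expand; f_equal; ring. Qed.
Lemma qscale0 (x : Q) : qscale 0 x = qzero R.
Proof. by quat_expand; f_equal; ring. Qed.
Lemma qconj1 : qconj (qone R) = qone R.
Proof. by quat_expand; f_equal; ring. Qed.
Lemma qconjM (x y : Q) : qconj (qmul x y) = qmul (qconj y) (qconj x).
Proof. by quat_expand; f_equal; ring. Qed.
Lemma qRe_mul_conj (x y : Q) : qRe (qmul x (qconj y)) = qdot x y.
Proof. by quat_expand; ring. Qed.

Lemma qnorm2M (x y : Q) : qnorm2 (qmul x y) = qnorm2 x * qnorm2 y.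
Proof. by quat_expand; ring. Qed.
Lemma qnorm2_conj (x : Q) : qnorm2 (qconj x) = qnorm2 x.
Proof. by quat_expand; ring. Qed.
Lemma qnorm2_scale (r : R) (x : Q) : qnorm2 (qscale r x) = r ^+ 2 * qnorm2 x.
Proof. by quat_expand; ring. Qed.
Lemma qnorm2_ge0 (x : Q) : 0 <= qnorm2 x.
Proof. by quat_expand; nra. Qed.
Lemma qnorm2_eq0 (x : Q) : qnorm2 x = 0 -> x = qzero R.
Proof. by quat_expand => h; f_equal; nra. Qed.
Lemma qnorm2_1 : qnorm2 (qone R) = 1.
Proof. by quat_expand; ring. Qed.
Lemma qnorm2_0 : qnorm2 (qzero R) = 0.
Proof. by quat_expand; ring. Qed.

Lemma qinvM (x y : Q) : qinv (qmul x y) = qmul (qinv y) (qinv x).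
Proof.
rewrite /qinv qnorm2M invfM qconjM.
by move: (qnorm2 x)^-1 (qnorm2 y)^-1 => u v; quat_expand; f_equal; ring.
Qed.

Lemma qmulV (x : Q) : qnorm2 x != 0 -> qmul x (qinv x) = qone R.
Proof.
move=> x_neq0; have := mulfV x_neq0; rewrite /qinv; move: (qnorm2 x)^-1 => u.
by quat_expand => e; f_equal; rewrite -?e; ring.
Qed.

Lemma qmulVq (x : Q) : qnorm2 x != 0 -> qmul (qinv x) x = qone R.
Proof.
move=> x_neq0; have := mulfV x_neq0; rewrite /qinv; move: (qnorm2 x)^-1 => u.
by quat_expand => e; f_equal; rewrite -?e; ring.
Qed.

Lemma qsub_norm2_eq0 (x y : Q) : qnorm2 (qadd x (qopp y)) = 0 -> x = y.
Proof. by move/qnorm2_eq0; quat_expand; case=> *; f_equal; lra. Qed.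

Lemma qmul_conj_sym0 (x y : Q) :
  qdot x y = 0 -> qadd (qmul (qconj y) x) (qmul (qconj x) y) = qzero R.
Proof. by quat_expand => h; f_equal; lra. Qed.

Lemma two_neq0 : (2 : R) != 0. Proof. by rewrite pnatr_eq0. Qed.

End QuaternionAlgebra.

Section HurwitzOrder.
Context {R : realFieldType}.
Local Notation Q := (quat R).

(* Coordinates in the Z-basis (1+i+j+k)/2, i, j, k of the Hurwitz order. *)
Definition hurwitz_comb (n0 n1 n2 n3 : int) : Q :=
  Quat (n0%:~R / 2) (n0%:~R / 2 + n1%:~R) (n0%:~R / 2 + n2%:~R) (n0%:~R / 2 + n3%:~R).

Definition hurwitz_lattice (x : Q) := exists n0 n1 n2 n3, x = hurwitz_comb n0 n1 n2 n3.

Lemma hurwitz_latticeP (x : Q) : hurwitz x -> hurwitz_lattice x.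
Proof.
have two_neq0 := @two_neq0 R.
case: x => x0 x1 x2 x3 [a [b [c [d [[/= -> [-> [-> ->]]]|[/= -> [-> [-> ->]]]]]]]].
- exists (2 * a), (b - a), (c - a), (d - a).
  by rewrite /hurwitz_comb; int_casts; f_equal; field.
- exists (2 * a + 1), (b - a), (c - a), (d - a).
  by rewrite /hurwitz_comb; int_casts; f_equal; field.
Qed.

Lemma hurwitz_lattice_add (x y : Q) :
  hurwitz_lattice x -> hurwitz_lattice y -> hurwitz_lattice (qadd x y).
Proof.
move=> [n0 [n1 [n2 [n3 ->]]]] [m0 [m1 [m2 [m3 ->]]]].
exists (n0 + m0), (n1 + m1), (n2 + m2), (n3 + m3).
by have := @two_neq0 R; rewrite /hurwitz_comb /qadd; int_casts => ?; f_equal; field.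
Qed.

Lemma hurwitz_lattice_mul (x y : Q) :
  hurwitz_lattice x -> hurwitz_lattice y -> hurwitz_lattice (qmul x y).
Proof.
move=> [n0 [n1 [n2 [n3 ->]]]] [m0 [m1 [m2 [m3 ->]]]].
exists (- n0 * m0 - n0 * m1 - n0 * m2 - n0 * m3 - n1 * m0 - 2 * n1 * m1 - n2 * m0
        - 2 * n2 * m2 - n3 * m0 - 2 * n3 * m3),
       (n0 * m0 + n0 * m1 + n0 * m3 + n1 * m0 + n1 * m1 + n2 * m0 + n2 * m2
        + n2 * m3 - n3 * m2 + n3 * m3),
       (n0 * m0 + n0 * m1 + n0 * m2 + n1 * m1 - n1 * m3 + n2 * m0 + n2 * m2
        + n3 * m0 + n3 * m1 + n3 * m3),
       (n0 * m0 + n0 * m2 + n0 * m3 + n1 * m0 + n1 * m1 + n1 * m2 - n2 * m1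
        + n2 * m2 + n3 * m0 + n3 * m3).
by have := @two_neq0 R; rewrite /hurwitz_comb /qmul; int_casts => ?; f_equal; field.
Qed.

Lemma hurwitz_lattice_conj (x : Q) : hurwitz_lattice x -> hurwitz_lattice (qconj x).
Proof.
move=> [n0 [n1 [n2 [n3 ->]]]]; exists n0, (- n0 - n1), (- n0 - n2), (- n0 - n3).
by have := @two_neq0 R; rewrite /hurwitz_comb /qconj; int_casts => ?; f_equal; field.
Qed.

Lemma hurwitz_lattice_pure_int (w1 w2 w3 : int) :
  hurwitz_lattice (Quat 0 w1%:~R w2%:~R w3%:~R : Q).
Proof. by exists 0, w1, w2, w3; rewrite /hurwitz_comb mulr0z mul0r !add0r. Qed.

Lemma qnorm2_hurwitz_comb n0 n1 n2 n3 : qnorm2 (hurwitz_comb n0 n1 n2 n3) =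
  (n0 * n0 + n0 * (n1 + n2 + n3) + n1 * n1 + n2 * n2 + n3 * n3)%:~R.
Proof. by have := @two_neq0 R; rewrite /hurwitz_comb /qnorm2; int_casts => ?; field. Qed.

Lemma hurwitz_lattice_norm2 (x : Q) :
  hurwitz_lattice x -> exists N : int, qnorm2 x = N%:~R.
Proof. by move=> [n0 [n1 [n2 [n3 ->]]]]; eexists; apply: qnorm2_hurwitz_comb. Qed.

Lemma hurwitz_lattice_pure (x : Q) : hurwitz_lattice x -> q0 x = 0 -> pure_int_quat x.
Proof.
move=> [n0 [n1 [n2 [n3 ->]]]] /= /eqP.
rewrite mulf_eq0 invr_eq0 (negbTE (@two_neq0 R)) orbF intr_eq0 => /eqP n0_eq0.
by exists n1, n2, n3; rewrite /hurwitz_comb n0_eq0 mul0r !add0r.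
Qed.

Lemma pm1_intr (a : int) : a = 1 \/ a = -1 -> pm1 (a%:~R : R).
Proof. by case=> ->; [left | right]. Qed.

Lemma pmhalf_intr (a : int) : a = 0 \/ a = -1 -> pmhalf (a%:~R + 2^-1 : R).
Proof.
case=> ->; [by left; rewrite add0r | right].
by have := @two_neq0 R; int_casts => ?; field.
Qed.

Lemma hurwitz_unit_int (a b c d : int) : a * a + b * b + c * c + d * d = 1 ->
  hurwitz_unit (Quat (a%:~R : R) b%:~R c%:~R d%:~R).
Proof.
move/int_sqr_sum4_eq1; rewrite /hurwitz_unit /=.
by case=> [|[|[|]]] [/pm1_intr ? [-> [-> ->]]]; do ?[by left | right].
Qed.

Lemma hurwitz_unit_half (a b c d : int) :
  (2 * a + 1) ^+ 2 + (2 * b + 1) ^+ 2 + (2 * c + 1) ^+ 2 + (2 * d + 1) ^+ 2 = 4 ->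
  hurwitz_unit (Quat (a%:~R + 2^-1 : R) (b%:~R + 2^-1) (c%:~R + 2^-1) (d%:~R + 2^-1)).
Proof.
move=> e; do 4 right; rewrite /=.
have odd_sqr_ge1 (n : int) : 1 <= (2 * n + 1) ^+ 2 by rewrite expr2; nia.
have odd_sqr_eq1 (n : int) : (2 * n + 1) ^+ 2 = 1 -> n = 0 \/ n = -1.
  by rewrite expr2; nia.
move: (odd_sqr_ge1 a) (odd_sqr_ge1 b) (odd_sqr_ge1 c) (odd_sqr_ge1 d) => *.
by split; [|split; [|split]]; apply/pmhalf_intr/odd_sqr_eq1; lia.
Qed.

Lemma hurwitz_lattice_unit (x : Q) : hurwitz_lattice x -> qnorm2 x = 1 -> hurwitz_unit x.
Proof.
move=> [n0 [n1 [n2 [n3 ->]]]] /eqP.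
rewrite qnorm2_hurwitz_comb -[1 : R]/(1%:~R) eqr_int => /eqP norm_eq1.
have two_neq0 := @two_neq0 R.
have [m [n0E|n0E]] := int_even_or_odd n0; rewrite {}n0E in norm_eq1 *.
- have -> : hurwitz_comb (2 * m) n1 n2 n3 =
      Quat m%:~R (m + n1)%:~R (m + n2)%:~R (m + n3)%:~R :> Q.
    by rewrite /hurwitz_comb; int_casts; f_equal; field.
  by apply: hurwitz_unit_int; nia.
- have -> : hurwitz_comb (2 * m + 1) n1 n2 n3 =
      Quat (m%:~R + 2^-1) ((m + n1)%:~R + 2^-1) ((m + n2)%:~R + 2^-1) ((m + n3)%:~R + 2^-1) :> Q.
    by rewrite /hurwitz_comb; int_casts; f_equal; field.
  by apply: hurwitz_unit_half; rewrite !expr2; nia.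
Qed.

Lemma hurwitz_lattice_of_pure_int (w : Q) : pure_int_quat w -> hurwitz_lattice w.
Proof. by case=> [w1 [w2 [w3 ->]]]; apply: hurwitz_lattice_pure_int. Qed.

Lemma pure_int_quat_opp (w : Q) : pure_int_quat w -> pure_int_quat (qopp w).
Proof.
by case=> [w1 [w2 [w3 ->]]]; exists (- w1), (- w2), (- w3); rewrite /qopp /= oppr0 !mulrNz.
Qed.

End HurwitzOrder.

Section BGMatrices.
Context {R : realFieldType}.
Local Notation Q := (quat R).

Definition BG_strong (a b c d : Q) :=
  [/\ qdot a c = 0, qdot b d = 0,
      qadd (qmul (qconj b) c) (qmul (qconj d) a) = qone R & qdot c d = 0].

Lemma BG_strong_of_invertible (a b c d : Q) :
  qmx_invertible a b c d -> BG a b c d -> BG_strong a b c d.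
Proof.
move=> [a' [b' [c' [d' [E11 [_ [E21 _]]]]]]] [].
rewrite !qRe_mul_conj => dot_ac dot_bd BG3.
(* The rows (d^bar, b^bar) and (c^bar, a^bar) of K A^* K form a left inverse of A. *)
have a'E : a' = qconj d.
  have e : qadd (qmul (qconj d) (qadd (qmul a a') (qmul b c')))
                (qmul (qconj b) (qadd (qmul c a') (qmul d c'))) =
    qadd (qmul (qadd (qmul (qconj d) a) (qmul (qconj b) c)) a')
         (qmul (qadd (qmul (qconj d) b) (qmul (qconj b) d)) c').
    by quat_expand; f_equal; ring.
  by move: e; rewrite E11 E21 qmulq1 qmulq0 qaddq0 (qaddC (qmul (qconj d) a)) BG3
    qmul1q qmul_conj_sym0 // qmul0q qaddq0.
have c'E : c' = qconj c.
  have e : qadd (qmul (qconj c) (qadd (qmul a a') (qmul b c')))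
                (qmul (qconj a) (qadd (qmul c a') (qmul d c'))) =
    qadd (qmul (qadd (qmul (qconj c) a) (qmul (qconj a) c)) a')
         (qmul (qconj (qadd (qmul (qconj b) c) (qmul (qconj d) a))) c').
    by quat_expand; f_equal; ring.
  by move: e; rewrite E11 E21 qmulq1 qmulq0 qaddq0 BG3 qconj1 qmul1q
    qmul_conj_sym0 // qmul0q qadd0q.
split=> //.
have : q0 (qadd (qmul c a') (qmul d c')) = 2 * qdot c d.
  by rewrite a'E c'E; quat_expand; ring.
by rewrite E21 => /esym/eqP; rewrite mulf_eq0 (negbTE (@two_neq0 R)) => /eqP.
Qed.

Lemma BG_strong_step (a b c d w : Q) : q0 w = 0 -> BG_strong a b c d ->
  BG_strong (qadd (qmul a w) b) a (qadd (qmul c w) d) c.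
Proof.
move=> w_pure [dot_ac dot_bd BG3 dot_cd].
have dot1 : qdot (qadd (qmul a w) b) (qadd (qmul c w) d) =
    qnorm2 w * qdot a c + qdot b d
    + qRe (qmul (qconj w) (qconj (qadd (qmul (qconj b) c) (qmul (qconj d) a)))).
  by quat_expand; ring.
have BG3' : qadd (qmul (qconj a) (qadd (qmul c w) d)) (qmul (qconj c) (qadd (qmul a w) b)) =
    qadd (qscale (2 * qdot a c) w) (qconj (qadd (qmul (qconj b) c) (qmul (qconj d) a))).
  by quat_expand; f_equal; ring.
have dot2 : qdot (qadd (qmul c w) d) c = q0 w * qnorm2 c + qdot c d.
  by quat_expand; ring.
split=> //.
- by rewrite dot1 dot_ac dot_bd BG3 qconj1 qmulq1 mulr0 !add0r /qRe /= w_pure.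
- by rewrite BG3' dot_ac mulr0 qscale0 qadd0q BG3 qconj1.
- by rewrite dot2 w_pure dot_cd mul0r addr0.
Qed.

Lemma BG_strong_c0 (a b d : Q) : hurwitz_lattice a -> hurwitz_lattice d ->
  BG_strong a b (qzero R) d -> a = d /\ qnorm2 d = 1.
Proof.
move=> ha hd [_ _ BG3 _]; rewrite qmulq0 qadd0q in BG3.
have norm_prod : qnorm2 d * qnorm2 a = 1.
  by rewrite -(qnorm2_conj d) -qnorm2M BG3 qnorm2_1.
have [Nd normd] := hurwitz_lattice_norm2 hd; have [Na norma] := hurwitz_lattice_norm2 ha.
have Nd_ge0 : 0 <= Nd by rewrite -(ler0z R) -normd qnorm2_ge0.
have Na_ge0 : 0 <= Na by rewrite -(ler0z R) -norma qnorm2_ge0.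
have normd1 : qnorm2 d = 1.
  have NdNa : Nd * Na = 1.
    by apply/eqP; rewrite -(eqr_int R) intrM -normd -norma norm_prod.
  have Nd_neq0 : Nd != 0 by apply: contra_eq_neq NdNa => ->; rewrite mul0r.
  have Na_neq0 : Na != 0 by apply: contra_eq_neq NdNa => ->; rewrite mulr0.
  have Nd1 : Nd = 1 by nia.
  by rewrite normd Nd1 mulr1z.
split=> //.
have : qmul d (qmul (qconj d) a) = qscale (qnorm2 d) a by quat_expand; f_equal; ring.
by rewrite BG3 qmulq1 normd1 qscale1.
Qed.

End BGMatrices.

Section Generation.
Context {R : realFieldType}.
Local Notation Q := (quat R).

(* (aq+b)(cq+d)^-1 = ((aw+b)r + a)((cw+d)r + c)^-1 with r = (q-w)^-1. *)
Lemma mobius_euclid_step (a b c d w : Q) :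
  mobius a b c d =
  mobius (qadd (qmul a w) b) a (qadd (qmul c w) d) c \o @Tinv R \o transl (qopp w).
Proof.
have den_factor (x y s q : Q) : qmul s (qadd q (qopp w)) = qone R ->
    qadd (qmul x q) y = qmul (qadd (qmul (qadd (qmul x w) y) s) x) (qadd q (qopp w)).
  by move=> e; rewrite qmulDl -qmulA e qmulq1; quat_expand; f_equal; ring.
apply: functional_extensionality => -[q|] /=; last by rewrite !qmulq0 !qadd0q.
have [r_eq0 | r_neq0] := eqVneq (qnorm2 (qadd q (qopp w))) 0.
  by rewrite (qsub_norm2_eq0 r_eq0).
have r_inv := qmulVq r_neq0.
rewrite /= (den_factor c d _ q r_inv) (den_factor a b _ q r_inv) qnorm2M mulf_eq0.
rewrite (negbTE r_neq0) orbF; case: eqP => // _.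
by rewrite qinvM qmulA -(qmulA _ (qadd q (qopp w))) (qmulV r_neq0) qmulq1.
Qed.

(* Choose w with |c|^2 w close to -c^bar d: since
   |c|^2 (c w + d) = c (|c|^2 w + c^bar d), this gives |c w + d|^2 <= 3/4 |c|^2. *)
Lemma exists_euclid_shift (c d : Q) (N : int) :
  hurwitz_lattice c -> hurwitz_lattice d -> qdot c d = 0 ->
  qnorm2 c = N%:~R -> 0 < N ->
  exists2 w, pure_int_quat w &
    exists2 M : int, qnorm2 (qadd (qmul c w) d) = M%:~R & M < N.
Proof.
move=> hc hd dot_cd normc N_gt0.
have [t1 [t2 [t3 t_def]]] : pure_int_quat (qmul (qconj c) d).
  apply: hurwitz_lattice_pure; first exact: hurwitz_lattice_mul (hurwitz_lattice_conj hc) hd.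
  by rewrite -dot_cd; quat_expand; ring.
have [w1 w1_near] := int_near_multiple t1 N_gt0.
have [w2 w2_near] := int_near_multiple t2 N_gt0.
have [w3 w3_near] := int_near_multiple t3 N_gt0.
pose w : Q := Quat 0 w1%:~R w2%:~R w3%:~R.
have w_int : pure_int_quat w by exists w1, w2, w3.
exists w => //.
have [M normM] := hurwitz_lattice_norm2 (hurwitz_lattice_add
  (hurwitz_lattice_mul hc (hurwitz_lattice_of_pure_int w_int)) hd).
exists M => //.
have key : qscale (qnorm2 c) (qadd (qmul c w) d) =
    qmul c (qadd (qscale (qnorm2 c) w) (qmul (qconj c) d)).
  by rewrite /w; quat_expand; f_equal; ring.
have normE : N * N * M = N * ((N * w1 + t1) * (N * w1 + t1)
    + (N * w2 + t2) * (N * w2 + t2) + (N * w3 + t3) * (N * w3 + t3)).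
  apply/eqP; rewrite -(eqr_int R); apply/eqP; int_casts.
  have := congr1 (@qnorm2 R) key.
  rewrite qnorm2_scale qnorm2M t_def normc normM /qnorm2 /qadd /qscale /= => e.
  by apply: etrans (etrans e _); ring.
have normE' : N * M = (N * w1 + t1) * (N * w1 + t1)
    + (N * w2 + t2) * (N * w2 + t2) + (N * w3 + t3) * (N * w3 + t3).
  by apply: (mulfI (lt0r_neq0 N_gt0)); rewrite mulrA normE.
nia.
Qed.

Variable S : (P1 R -> P1 R) -> Prop.
Hypothesis S_gen : forall g, PSL2H_generator g -> S g.
Hypothesis S_comp : forall g h, S g -> S h -> S (g \o h).

Lemma mobius_c0_in_S (a b d : Q) :
  hurwitz_lattice a -> hurwitz_lattice b -> hurwitz_lattice d ->
  BG_strong a b (qzero R) d -> S (mobius a b (qzero R) d).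
Proof.
move=> ha hb hd hBG; have [a_eq_d normd1] := BG_strong_c0 ha hd hBG.
case: hBG => _ dot_bd _ _; rewrite a_eq_d.
have qinv_d : qinv d = qconj d by rewrite /qinv normd1 invr1 qscale1.
have -> : mobius d b (qzero R) d = transl (qmul b (qconj d)) \o uconj d.
  apply: functional_extensionality => -[q|] /=; last by rewrite qnorm2_0 eqxx.
  by rewrite qmul0q qadd0q normd1 oner_eq0 qinv_d qmulDl.
apply: S_comp; apply: S_gen; right.
- left; exists (qmul b (qconj d)); split=> //.
  apply: hurwitz_lattice_pure; last by rewrite -/(qRe _) qRe_mul_conj.
  exact: hurwitz_lattice_mul hb (hurwitz_lattice_conj hd).
- by right; exists d; split=> //; apply: hurwitz_lattice_unit.
Qed.

Lemma mobius_in_S_descent (k : nat) (a b c d : Q) (N : int) :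
  hurwitz_lattice a -> hurwitz_lattice b -> hurwitz_lattice c -> hurwitz_lattice d ->
  BG_strong a b c d -> qnorm2 c = N%:~R -> N < k%:Z -> S (mobius a b c d).
Proof.
elim: k a b c d N => [|k IH] a b c d N ha hb hc hd hBG normc N_lt.
  by have := qnorm2_ge0 c; rewrite normc ler0z; lia.
have [N_eq0 | N_gt0] : N = 0 \/ 0 < N by have := qnorm2_ge0 c; rewrite normc ler0z; lia.
  have c_eq0 : c = qzero R by apply: qnorm2_eq0; rewrite normc N_eq0.
  by rewrite c_eq0 in hBG *; apply: mobius_c0_in_S.
have [_ _ _ dot_cd] := hBG.
have [w w_int [M normM M_lt]] := exists_euclid_shift hc hd dot_cd normc N_gt0.
have hw := hurwitz_lattice_of_pure_int w_int.
rewrite (mobius_euclid_step a b c d w); apply: S_comp; first apply: S_comp.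
- apply: (IH _ _ _ _ M) => //; last by lia.
  + exact: hurwitz_lattice_add (hurwitz_lattice_mul ha hw) hb.
  + exact: hurwitz_lattice_add (hurwitz_lattice_mul hc hw) hd.
  + by apply: BG_strong_step => //; case: w_int => [? [? [? ->]]].
- by apply: S_gen; left.
- by apply: S_gen; right; left; exists (qopp w); split; first exact: pure_int_quat_opp.
Qed.

Lemma mobius_in_S (a b c d : Q) :
  hurwitz_lattice a -> hurwitz_lattice b -> hurwitz_lattice c -> hurwitz_lattice d ->
  BG_strong a b c d -> S (mobius a b c d).
Proof.
move=> ha hb hc hd hBG; have [N normc] := hurwitz_lattice_norm2 hc.
have N_ge0 : 0 <= N by have := qnorm2_ge0 c; rewrite normc ler0z.
by apply: (mobius_in_S_descent (k := (absz N).+1) ha hb hc hd hBG normc); lia.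
Qed.

End Generation.

Theorem mainTheorem11 (R : realFieldType) (a b c d : quat R) :
  hurwitz a -> hurwitz b -> hurwitz c -> hurwitz d ->
  qmx_invertible a b c d ->
  BG a b c d ->
  in_PSL2H (mobius a b c d).
Proof.
move=> ha hb hc hd hinv hBG S _ S_gen S_comp _.
apply: mobius_in_S => //; try exact: hurwitz_latticeP.
exact: BG_strong_of_invertible.
Qed.
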